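(* Let $p$ be a prime, $\alpha\in[0,1]$ and $e\ge1$ an integer. The following are equivalent: (1) $\lfloor (p^e-1)\alpha\rfloor=p^e\langle\alpha\rangle_e$; (2) $\alpha\le p^e\langle\alpha\rangle^e$; (3) $\alpha\ge\frac{p^e}{p^e-1}\langle\alpha\rangle_e$.
   Context: For $\alpha\in(0,1]$, the non-terminating base $p$ expansion is the unique expression $\alpha=\sum_{e\ge1}a_e/p^e$ with integers $0\le a_e\le p-1$ not all eventually zero. The $e$-th truncation is $\langle\alpha\rangle_e:=\sum_{i=1}^e a_i/p^i$, and the $e$-th tail is $\langle\alpha\rangle^e:=\alpha-\langle\alpha\rangle_e$. By convention $\langle0\rangle_e=\langle0\rangle^e=0$. *)

From Stdlib Require Import ClassicalEpsilon.
From mathcomp Require Import all_boot all_order all_algebra.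
From mathcomp Require Import all_classical all_reals all_analysis.
Set Implicit Arguments. Unset Strict Implicit. Unset Printing Implicit Defensive.
Import Order.TTheory GRing.Theory Num.Theory numFieldNormedType.Exports.
Local Open Scope classical_set_scope.
Local Open Scope ring_scope.

(* [a] (digits a 1, a 2, ...; a 0 is unused) is the non-terminating base p
   expansion of alpha: alpha = sum_{e>=1} a_e / p^e, 0 <= a_e <= p-1,
   and the a_e are not eventually zero. *)
Definition is_ntexp {R : realType} (p : nat) (alpha : R) (a : nat -> nat) : Prop :=
  (forall e, (1 <= e)%N -> (a e < p)%N) /\
  (forall n, exists m, (n <= m)%N /\ a m <> 0%N) /\
  (series (fun k => (a k.+1)%:R / (p%:R ^+ k.+1) : R) @ \oo --> alpha).

(* The digit sequence of the non-terminating expansion (unique when it exists,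
   for alpha in (0,1]). *)
Definition ntdigits {R : realType} (p : nat) (alpha : R) : nat -> nat :=
  epsilon (inhabits (fun _ => 0%N)) (is_ntexp p alpha).

Definition trunc {R : realType} (p : nat) (alpha : R) (e : nat) : R :=
  if alpha == 0 then 0
  else \sum_(1 <= i < e.+1) ((ntdigits p alpha i)%:R / (p%:R ^+ i)).

Definition tail {R : realType} (p : nat) (alpha : R) (e : nat) : R :=
  alpha - trunc p alpha e.

From Stdlib Require Import ClassicalEpsilon Classical.
From mathcomp Require Import all_boot all_order all_algebra.
From mathcomp Require Import all_classical all_reals all_analysis.
From mathcomp Require Import ring lra zify.
Import Order.TTheory GRing.Theory Num.Theory numFieldNormedType.Exports.
Local Open Scope classical_set_scope.
Local Open Scope ring_scope.

(* Write q = p^e and T = <alpha>_e.  Then qT is an integer, and since every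
   digit is at most p - 1 the tail satisfies alpha - T <= 1/q.  Hence
   (q-1) alpha - qT = q (alpha - T) - alpha < 1, so (1) reduces to its lower
   half alpha <= q (alpha - T), which is (2); and (3) is (2) rearranged.
   The only real work is that the non-terminating expansion exists at all
   (otherwise <alpha>_e is not given by digits): its digits are the
   successive differences of the largest integers strictly below p^k alpha. *)

Lemma floor_eq_scaled_trunc {R : archiRealFieldType} {q a t : R} :
  q * t \is a Num.int -> q * (a - t) - a < 1 ->
  (Num.floor ((q - 1) * a))%:~R = q * t <-> a <= q * (a - t).
Proof.
move=> /intrP[z qt_z] ht; rewrite mulrBr qt_z in ht *; split.
- move=> /intr_inj /eqP; rewrite floor_eq intrD -[1%:~R]/(1 : R).
  by move=> /andP[h1 h2]; lra.
- move=> h; congr intr; apply/eqP; rewrite floor_eq intrD.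
  by apply/andP; split; rewrite -?[1%:~R]/(1 : R); lra.
Qed.

Lemma le_scaled_tail_iff {R : realFieldType} {q : R} (a t : R) :
  1 < q -> a <= q * (a - t) <-> q / (q - 1) * t <= a.
Proof.
move=> hq; rewrite mulrAC ler_pdivrMr; last lra.
by rewrite mulrBr; split=> h; lra.
Qed.

Section Expansion.
Context {R : realType} {p : nat} (p_gt1 : (1 < p)%N).
Local Notation P := (p%:R : R).

Definition digit_sum (a : nat -> nat) (n : nat) : R :=
  \sum_(1 <= i < n.+1) (a i)%:R / P ^+ i.

Lemma P_gt1 : 1 < P. Proof. by rewrite ltr1n. Qed.
Lemma P_gt0 : 0 < P. Proof. by have := P_gt1; lra. Qed.
Lemma expP_gt0 n : 0 < P ^+ n. Proof. exact: exprn_gt0 P_gt0. Qed.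

Lemma digit_sum0 a : digit_sum a 0 = 0. Proof. by rewrite /digit_sum big_geq. Qed.

Lemma digit_sumS a n : digit_sum a n.+1 = digit_sum a n + (a n.+1)%:R / P ^+ n.+1.
Proof. by rewrite /digit_sum big_nat_recr. Qed.

Lemma series_digit_sum a n :
  series (fun k => (a k.+1)%:R / P ^+ k.+1 : R) n = digit_sum a n.
Proof. by rewrite seriesEnat /= /digit_sum big_add1. Qed.

Lemma scaled_digit_sum_int a n : P ^+ n * digit_sum a n \is a Num.int.
Proof.
elim: n => [|n IH]; first by rewrite digit_sum0 mulr0.
have -> : P ^+ n.+1 * digit_sum a n.+1 = P * (P ^+ n * digit_sum a n) + (a n.+1)%:R.
  rewrite digit_sumS exprS; have := expP_gt0 n; have := P_gt0 => h1 h2.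
  by field; rewrite ?mulf_neq0 ?lt0r_neq0.
by apply: rpredD; [apply: rpredM|]; rewrite ?natr_int.
Qed.

Lemma digit_term_le k {c : nat} :
  (c < p)%N -> c%:R / P ^+ k.+1 <= (P ^+ k)^-1 - (P ^+ k.+1)^-1.
Proof.
move=> hc; have hk := expP_gt0 k; have h1 := P_gt1.
have hcP : c%:R <= P - 1 by move: hc; rewrite -(ler_nat R) -natr1; lra.
have -> : (P ^+ k)^-1 - (P ^+ k.+1)^-1 = (P - 1) / P ^+ k.+1.
  by rewrite exprS; field; rewrite ?mulf_neq0 ?lt0r_neq0 //; lra.
by rewrite ler_wpM2r // invr_ge0 ltW.
Qed.

Lemma ntexp_tail_le {x a} e : is_ntexp p x a -> x - digit_sum a e <= (P ^+ e)^-1.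
Proof.
move=> [a_lt [_ a_cvg]].
have partial_le j :
    digit_sum a (e + j) <= digit_sum a e + (P ^+ e)^-1 - (P ^+ (e + j))^-1.
  elim: j => [|j IH]; first by rewrite addn0; lra.
  rewrite addnS digit_sumS.
  by have := digit_term_le (e + j) (a_lt (e + j).+1 isT); lra.
suff : x <= digit_sum a e + (P ^+ e)^-1 by lra.
apply: (closed_cvg _ (@closed_le _ (digit_sum a e + (P ^+ e)^-1)) _ _ a_cvg).
exists e => // n /= hen; rewrite series_digit_sum -(subnKC hen).
by have := partial_le (n - e)%N; have := expP_gt0 (e + (n - e)); rewrite -invr_gt0; lra.
Qed.

Section Existence.
Context {x : R} (x_gt0 : 0 < x) (x_le1 : x <= 1).

(* The largest integer strictly below p^k x; it is the numerator of <x>_k. *)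
Definition trunc_numer (k : nat) : int := Num.ceil (P ^+ k * x) - 1.

Lemma trunc_numer_itv k :
  (trunc_numer k)%:~R < P ^+ k * x <= (trunc_numer k)%:~R + 1.
Proof.
rewrite /trunc_numer intrD -[(-1)%:~R]/(-1 : R) subrK.
by have := ceil_itv (P ^+ k * x); rewrite intrD.
Qed.

Lemma trunc_numer0 : trunc_numer 0 = 0.
Proof. by rewrite /trunc_numer expr0 mul1r (@ceil_def _ x 1) ?subrr // x_gt0 x_le1. Qed.

Lemma trunc_numerS_itv k :
  (p%:Z * trunc_numer k <= trunc_numer k.+1 < p%:Z * trunc_numer k + p%:Z)%R.
Proof.
have /andP[h1 h2] := trunc_numer_itv k; have /andP[h3 h4] := trunc_numer_itv k.+1.
have hP := P_gt0.
have scaleS : P ^+ k.+1 * x = P * (P ^+ k * x) by rewrite exprS mulrA.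
move: (trunc_numer k) (trunc_numer k.+1) h1 h2 h3 h4 => L M h1 h2 h3 h4.
apply/andP; split.
- rewrite -ltzD1 -(ltr_int R) intrD intrM -[1%:~R]/(1 : R).
  have : P * L%:~R < P * (P ^+ k * x) by rewrite ltr_pM2l.
  by rewrite -scaleS; lra.
- rewrite -(ltr_int R) intrD intrM.
  have : P * (P ^+ k * x) <= P * (L%:~R + 1) by rewrite ler_pM2l.
  by rewrite -scaleS; lra.
Qed.

Definition digit (k : nat) : nat := absz (trunc_numer k - p%:Z * trunc_numer k.-1)%R.

Lemma digitE k :
  (digit k.+1)%:R = (trunc_numer k.+1)%:~R - P * (trunc_numer k)%:~R :> R.
Proof.
have /andP[h1 _] := trunc_numerS_itv k.
by rewrite /digit /= natr_absz ger0_norm ?subr_ge0 // rmorphB /= intrM.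
Qed.

Lemma digit_lt k : (1 <= k)%N -> (digit k < p)%N.
Proof.
case: k => // k _; have /andP[h1 h2] := trunc_numerS_itv k.
rewrite /digit /=; set M := (p%:Z * trunc_numer k)%R in h1 h2 *; lia.
Qed.

Lemma digit_sum_digit n : digit_sum digit n = (trunc_numer n)%:~R / P ^+ n.
Proof.
elim: n => [|n IH]; first by rewrite digit_sum0 trunc_numer0 mul0r.
rewrite digit_sumS IH digitE exprS; have := expP_gt0 n; have := P_gt0 => h1 h2.
by field; rewrite ?mulf_neq0 ?lt0r_neq0.
Qed.

Lemma digit_sum_digit_itv n : x - (P ^+ n)^-1 <= digit_sum digit n < x.
Proof.
rewrite digit_sum_digit; have /andP[h1 h2] := trunc_numer_itv n.
have hn := expP_gt0 n; apply/andP; split.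
- rewrite lerBlDr -[X in _ + X]mul1r -mulrDl ler_pdivlMr //; lra.
- by rewrite ltr_pdivrMr //; lra.
Qed.

Lemma digit_series_cvg :
  series (fun k => (digit k.+1)%:R / P ^+ k.+1 : R) @ \oo --> x.
Proof.
apply: (@squeeze_cvgr _ _ _ _ (fun n => x - P^-1 ^+ n) (fun=> x)).
- exists 0%N => // n _ /=; rewrite series_digit_sum exprVn.
  by have /andP[-> /ltW ->] := digit_sum_digit_itv n.
- have P_inv_lt1 : `|P^-1| < 1.
    by rewrite ger0_norm ?invr_ge0 ?ltW ?P_gt0 // invf_lt1 ?P_gt0 ?P_gt1.
  by rewrite -{2}(subr0 x); apply: cvgB (cvg_cst x) (cvg_expr P_inv_lt1).
- exact: cvg_cst.
Qed.

(* If the digits vanished from n on, the series would converge to its n-th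
   partial sum, which is strictly below x. *)
Lemma digit_not_eventually0 n : exists m, (n <= m)%N /\ digit m <> 0%N.
Proof.
apply: NNPP => hn.
have digit0 m : (n <= m)%N -> digit m = 0%N.
  by move=> hm; apply: NNPP => hm'; apply: hn; exists m.
have partial_const j : digit_sum digit (n + j) = digit_sum digit n.
  elim: j => [|j IH]; first by rewrite addn0.
  by rewrite addnS digit_sumS IH digit0 ?mul0r ?addr0 //; lia.
have : x <= digit_sum digit n.
  apply: (closed_cvg _ (@closed_le _ (digit_sum digit n)) _ _ digit_series_cvg).
  by exists n => // m /= hm; rewrite series_digit_sum -(subnKC hm) partial_const.
by have := digit_sum_digit_itv n; lra.
Qed.

Lemma ntdigits_ntexp : is_ntexp p x (ntdigits p x).
Proof.
apply: epsilon_spec; exists digit.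
by split; [exact: digit_lt | split; [exact: digit_not_eventually0 | exact: digit_series_cvg]].
Qed.

End Existence.

Lemma scaled_trunc_int x e : P ^+ e * trunc p x e \is a Num.int.
Proof.
by rewrite /trunc; case: eqP => _; [rewrite mulr0 | exact: scaled_digit_sum_int].
Qed.

Lemma scaled_tail_sub_lt x e : 0 <= x <= 1 -> P ^+ e * tail p x e - x < 1.
Proof.
move=> /andP[x_ge0 x_le1]; rewrite /tail /trunc.
case: eqP => [->|/eqP x_neq0]; first by rewrite !subr0 mulr0.
have x_gt0 : 0 < x by rewrite lt0r x_neq0.
rewrite -/(digit_sum (ntdigits p x) e).
have := ntexp_tail_le e (ntdigits_ntexp x_gt0 x_le1).
rewrite -(ler_pM2l (expP_gt0 e)) mulrV ?unitfE ?lt0r_neq0 ?expP_gt0 //; lra.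
Qed.

End Expansion.

Theorem mainTheorem14 (R : realType) (p : nat) (alpha : R) (e : nat) :
  prime p -> 0 <= alpha <= 1 -> (1 <= e)%N ->
  [/\ ((Num.floor ((p%:R ^+ e - 1) * alpha))%:~R = p%:R ^+ e * trunc p alpha e
        <-> alpha <= p%:R ^+ e * tail p alpha e),
      (alpha <= p%:R ^+ e * tail p alpha e
        <-> alpha >= p%:R ^+ e / (p%:R ^+ e - 1) * trunc p alpha e) &
      (alpha >= p%:R ^+ e / (p%:R ^+ e - 1) * trunc p alpha e
        <-> (Num.floor ((p%:R ^+ e - 1) * alpha))%:~R = p%:R ^+ e * trunc p alpha e)].
Proof.
move=> /prime_gt1 p_gt1 alpha01 e_ge1.
have q_gt1 : 1 < (p%:R : R) ^+ e by rewrite exprn_egt1 ?P_gt1 // -lt0n.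
have tail_lt := scaled_tail_sub_lt p_gt1 alpha e alpha01.
rewrite /tail in tail_lt *.
have AB := floor_eq_scaled_trunc (scaled_trunc_int p_gt1 alpha e) tail_lt.
have BC := le_scaled_tail_iff alpha (trunc p alpha e) q_gt1.
by split; [exact: AB | exact: BC | rewrite -BC -AB].
Qed.
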